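(* Let $\Gamma$ be a finite connected $(G,2)$-distance-transitive graph of square-free order, where $G$ is soluble, and let $F$ be the Fitting subgroup of $G$. If $|F|$ is square-free, then $F$ does not have exactly $2$ orbits on $V(\Gamma)$.
   Context: For $G\le\mathrm{Aut}(\Gamma)$, $\Gamma$ is $(G,2)$-distance-transitive if its diameter is at least $2$, $G$ is vertex-transitive and $G_u$ is transitive on $\Gamma(u)$ and $\Gamma_2(u)$ for every vertex $u$. The Fitting subgroup is the subgroup generated by all nilpotent normal subgroups. *)

From mathcomp Require Import all_boot all_fingroup all_solvable maximal.
Set Implicit Arguments. Unset Strict Implicit. Unset Printing Implicit Defensive.
Local Open Scope group_scope.

Definition simple_graph (T : finType) (e : rel T) : Prop :=
  symmetric e /\ irreflexive e.

Definition graph_connected (T : finType) (e : rel T) : Prop :=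
  forall u v : T, connect e u v.

Definition nbhd1 (T : finType) (e : rel T) (u : T) : {set T} :=
  [set v | e u v].

Definition nbhd2 (T : finType) (e : rel T) (u : T) : {set T} :=
  [set v | [&& v != u, ~~ e u v & [exists w, e u w && e w v]]].

Definition diam_ge2 (T : finType) (e : rel T) : Prop :=
  exists u v : T, u != v /\ ~~ e u v.

Definition graph_auts (T : finType) (e : rel T) (G : {group {perm T}}) : Prop :=
  forall g, g \in G -> forall x y, e (g x) (g y) = e x y.

Definition dist2_transitive (T : finType) (e : rel T) (G : {group {perm T}}) : Prop :=
  [/\ diam_ge2 e,
      [transitive G, on [set: T] | 'P] &
      forall u : T,
        [transitive 'C_G[u | 'P], on nbhd1 e u | 'P] /\
        [transitive 'C_G[u | 'P], on nbhd2 e u | 'P] ].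

Definition squarefree (n : nat) : Prop :=
  0 < n /\ forall p, prime p -> ~~ (p * p %| n).

Definition n_orbits (T : finType) (H : {group {perm T}}) : nat :=
  #|orbit 'P H @: [set: T]|.

From mathcomp Require Import all_boot all_fingroup all_solvable maximal.
Set Implicit Arguments. Unset Strict Implicit. Unset Printing Implicit Defensive.

(* F := F(G) is nilpotent of squarefree order, hence cyclic.  Suppose F has
   exactly two orbits.  Since G is arc-transitive and permutes the F-orbits,
   the orbits are the two parts of a bipartition, and F is semiregular: its
   point stabilisers are G-conjugate, hence equal, subgroups of the cyclic F.
   Let D be the set of elements of F moving a vertex u to distance 2.  The
   stabiliser G_u is transitive on D by conjugation, and D is contained in
   the corresponding set for any vertex of the other part; this produces y in G
   interchanging the two parts and centralising D.  By connectivity D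
   generates F, so y lies in C_G(F), which is contained in F for soluble G;
   but F fixes each part. *)

Local Open Scope group_scope.

(* Otherwise take the last term K of the derived series of C_G(F(G)) not in
   F(G): K' lies in F(G), which K centralises, so the normal subgroup K is
   nilpotent and lies in F(G). *)
Lemma cent_sub_Fitting (gT : finGroupType) (G : {group gT}) :
  solvable G -> 'C_G('F(G)) \subset 'F(G).
Proof.
move=> solG; set C := 'C_G('F(G)).
have nsCG : C <| G.
  by have := subcent_normal G 'F(G); rewrite (setIidPl (normal_norm (Fitting_normal G))).
have exK : exists k, C^`(k) \subset 'F(G).
  have /derivedP[k Ck1] : solvable C by apply: solvableS solG; apply: normal_sub.
  by exists k; rewrite Ck1 sub1G.
case: (ex_minnP exK) => [[//|m] sK'F minm].
have sKC : C^`(m) \subset 'C('F(G)) by apply: subset_trans (der_sub m C) (subsetIr _ _).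
have nilK : nilpotent C^`(m).
  rewrite -quotient_center_nil; apply/abelian_nil/sub_der1_abelian.
  by rewrite subsetI der_sub (subset_trans sK'F) // centsC.
have := Fitting_max (char_normal_trans (der_char m C) nsCG) nilK.
by move/minm; rewrite ltnn.
Qed.

Lemma squarefree_nil_cyclic (gT : finGroupType) (G : {group gT}) :
  squarefree #|G| -> nilpotent G -> cyclic G.
Proof.
move=> [_ sqfG] nilG; apply: nil_Zgroup_cyclic nilG.
apply/forall_inP => P /SylowP[p p_pr sylP].
have : logn p #|G| < 2.
  by rewrite ltnNge -pfactor_dvdn ?cardG_gt0 // expnS expn1 sqfG.
have := card_Hall sylP; rewrite p_part; case: (logn p #|G|) => [|[|//]] cardP _.
  by rewrite (card1_trivg cardP) cyclic1.
by rewrite prime_cyclic // cardP expn1.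
Qed.

Lemma cyclic_conjgC (gT : finGroupType) (F : {group gT}) x y z :
  cyclic F -> y \in 'N(F) -> z \in 'N(F) -> x \in F -> (x ^ y) ^ z = (x ^ z) ^ y.
Proof.
case/cyclicP=> c -> Ny Nz /cycleP[k ->].
have /cycleP[i cy] : c ^ y \in <[c]> by rewrite memJ_norm ?cycle_id.
have /cycleP[j cz] : c ^ z \in <[c]> by rewrite memJ_norm ?cycle_id.
by rewrite !conjXg cy cz !conjXg cy cz -!expgM !mulnA (mulnC i j).
Qed.

Lemma mem_orbit_norm (T : finType) (F : {group {perm T}}) g x y :
  g \in 'N(F) -> (g y \in orbit 'P F (g x)) = (y \in orbit 'P F x).
Proof. by move/normP=> {1}<-; rewrite -!apermE orbit_conjsg. Qed.

Lemma n_orbits2_exists (T : finType) (F : {group {perm T}}) x :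
  n_orbits F = 2 -> exists y, y \notin orbit 'P F x.
Proof.
move=> orbF2; have /card_gt1P[_ [_ [/imsetP[y1 _ ->] /imsetP[y2 _ ->]]]] :
  1 < n_orbits F by rewrite orbF2.
rewrite orbit_eq_mem; have [y1x|] := boolP (y1 \in orbit 'P F x); last by exists y1.
move=> y12; exists y2; apply: contra y12 => y2x.
by apply: orbit_trans y1x _; rewrite orbit_sym.
Qed.

Lemma n_orbits2_cover (T : finType) (F : {group {perm T}}) x y z :
  n_orbits F = 2 -> y \notin orbit 'P F x ->
  z \in orbit 'P F x \/ z \in orbit 'P F y.
Proof.
move=> orbF2 yFx.
have defO : orbit 'P F @: [set: T] = [set orbit 'P F x; orbit 'P F y].
  apply/esym/eqP; rewrite eqEcard -/(n_orbits F) orbF2.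
  rewrite cards2 orbit_eq_mem orbit_sym yFx andbT.
  by apply/subsetP => O /set2P[] ->; apply: imset_f.
have : orbit 'P F z \in orbit 'P F @: [set: T] by apply: imset_f.
by rewrite defO => /set2P[] <-; [left | right]; apply: orbit_refl.
Qed.

Lemma graph_auts_nbhd2 (T : finType) (e : rel T) (G : {group {perm T}}) g x y :
  graph_auts e G -> g \in G -> (g y \in nbhd2 e (g x)) = (y \in nbhd2 e x).
Proof.
move=> autG Gg; rewrite !inE (inj_eq perm_inj) autG //; congr [&& _, _ & _].
apply/existsP/existsP => -[w /andP[exw ewy]].
  by exists (g^-1 w); rewrite -[e x _](autG g Gg) -[e _ y](autG g Gg) !permKV exw.
by exists (g w); rewrite !autG ?exw.
Qed.

(* S together with its neighbourhood is closed under adjacency. *)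
Lemma connect_dist2_closed (T : finType) (e : rel T) (S : {set T}) u :
  symmetric e -> graph_connected e -> u \in S ->
  (forall p, p \in S -> nbhd2 e p \subset S) ->
  forall z, z \in S \/ exists2 p, p \in S & e p z.
Proof.
move=> e_sym e_conn Su clS z.
pose S1 := S :|: [set z | [exists p in S, e p z]].
have cl1 : closed e S1.
  apply: (intro_closed (sym_connect_sym e_sym)) => a b eab; rewrite !inE.
  case/orP => [Sa | /exists_inP[p Sp epa]].
    by apply/orP; right; apply/exists_inP; exists a.
  have [-> | bp] := eqVneq b p; first by rewrite Sp.
  have [epb | nepb] := boolP (e p b).
    by apply/orP; right; apply/exists_inP; exists p.
  apply/orP; left; apply: (subsetP (clS p Sp)).
  by rewrite inE bp nepb; apply/existsP; exists a; rewrite epa.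
have : z \in S1 by rewrite -(closed_connect cl1 (e_conn u z)) inE Su.
by rewrite !inE => /orP[Sz | /exists_inP[p Sp epz]]; [left | right; exists p].
Qed.

Definition dist2_elts (T : finType) (e : rel T) (F : {set {perm T}}) (u : T) :
  {set {perm T}} := F :&: [set f : {perm T} | f u \in nbhd2 e u].

Lemma mem_dist2_elts (T : finType) (e : rel T) (F : {set {perm T}}) u f :
  (f \in dist2_elts e F u) = (f \in F) && (f u \in nbhd2 e u).
Proof. by rewrite !inE. Qed.

Section NormalSubgroupOrbits.

Variables (T : finType) (e : rel T) (G F : {group {perm T}}).
Hypotheses (e_sym : symmetric e) (e_conn : graph_connected e).
Hypothesis autG : graph_auts e G.
Hypothesis trG : [transitive G, on [set: T] | 'P].
Hypotheses (sFG : F \subset G) (nFG : G \subset 'N(F)).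

Local Notation orbF := (orbit 'P F).
Local Notation D := (dist2_elts e F).

Hypothesis arcG : forall u, [transitive 'C_G[u | 'P], on nbhd1 e u | 'P].

(* G permutes the F-orbits and is arc-transitive, so one edge inside an orbit
   puts every edge inside an orbit. *)
Lemma orbF_edge_transitive x y : e x y -> y \in orbF x -> forall z, z \in orbF x.
Proof.
move=> exy yFx.
have arc_orbF a b : e a b -> b \in orbF a.
  have [g Gg ->] := atransP2 trG (in_setT x) (in_setT a); rewrite /= apermE => eab.
  have gy_nbhd : g y \in nbhd1 e (g x) by rewrite inE autG.
  have b_nbhd : b \in nbhd1 e (g x) by rewrite inE.
  have [h /setIP[Gh /astab1P]] := atransP2 (arcG (g x)) gy_nbhd b_nbhd.
  by rewrite /= !apermE => hgx ->; rewrite -{1}hgx !mem_orbit_norm ?(subsetP nFG).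
move=> z; rewrite -(closed_connect _ (e_conn x z)) ?orbit_refl //.
apply: (intro_closed (sym_connect_sym e_sym)) => a b /arc_orbF.
exact: orbit_trans.
Qed.

Hypothesis cycF : cyclic F.

(* Stabilisers in F of points of one G-orbit are G-conjugate subgroups of the
   cyclic group F, hence all equal. *)
Lemma astab1_cyclic_normal z : 'C_F[z | 'P] = 1.
Proof.
have stab_const x : 'C_F[x | 'P] = 'C_F[z | 'P].
  have [g Gg ->] := atransP2 trG (in_setT z) (in_setT x).
  have nFg : F :^ g = F by apply/normP/(subsetP nFG).
  have stabJ : 'C_F[aperm z g | 'P] = 'C_F[z | 'P] :^ g.
    by rewrite conjIg nFg -astab1_act.
  by apply/eqP; rewrite (eq_subG_cyclic cycF) ?subsetIl //= stabJ cardJg.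
apply/eqP; rewrite -subG1; apply/subsetP => f Cf; rewrite inE; apply/eqP/permP => x.
have : f \in 'C_F[x | 'P] by rewrite stab_const.
by case/setIP=> _ /astab1P; rewrite perm1.
Qed.

Lemma semiregular_cyclic_normal z f : f \in F -> f z = z -> f = 1.
Proof.
move=> Ff fz; have : f \in 'C_F[z | 'P] by rewrite inE Ff; apply/astab1P.
by rewrite astab1_cyclic_normal => /set1P.
Qed.

Lemma eq_perm_cyclic_normal z f1 f2 : f1 \in F -> f2 \in F -> f1 z = f2 z -> f1 = f2.
Proof.
move=> Ff1 Ff2 f12; apply/eqP; rewrite eq_mulgV1; apply/eqP.
apply: (semiregular_cyclic_normal (z := z)); first by rewrite groupM ?groupV.
by rewrite permM f12 permK.
Qed.

Lemma dist2_eltsJ g z : g \in G -> D (g z) = D z :^ g.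
Proof.
move=> Gg; apply/setP => f.
rewrite mem_conjg !mem_dist2_elts memJ_norm ?groupV ?(subsetP nFG) //.
congr (_ && _); rewrite conjgE invgK !permM.
by rewrite -(graph_auts_nbhd2 (g z) (f (g z)) autG (groupVr Gg)) permK.
Qed.

Lemma dist2_elts_orbit y z : y \in orbF z -> D y = D z.
Proof.
case/orbitP=> h Fh <-; rewrite /= apermE dist2_eltsJ ?(subsetP sFG) //.
apply/normP/(subsetP (cent_sub _)); apply: subsetP h Fh.
exact: subset_trans (cyclic_abelian cycF) (centS (subsetIl _ _)).
Qed.

Hypothesis dist2G : forall u, [transitive 'C_G[u | 'P], on nbhd2 e u | 'P].

Lemma dist2_elts_conj_trans u f1 f2 :
  f1 \in D u -> f2 \in D u -> exists2 x, x \in 'C_G[u | 'P] & f1 ^ x = f2.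
Proof.
rewrite !mem_dist2_elts => /andP[Ff1 f1u] /andP[Ff2 f2u].
have [x Cx f2u_eq] := atransP2 (dist2G u) f1u f2u.
exists x => //; case/setIP: Cx => Gx /astab1P; rewrite /= apermE in f2u_eq * => xu.
have xVu : x^-1 u = u by rewrite -{1}xu permK.
apply: (eq_perm_cyclic_normal (z := u)); rewrite ?memJ_norm ?(subsetP nFG) //.
by rewrite conjgE !permM xVu f2u_eq.
Qed.

Hypothesis orbF2 : n_orbits F = 2.

Lemma orbF_independent x y : e x y -> y \notin orbF x.
Proof.
move=> exy; apply/negP => yFx; have [z] := n_orbits2_exists x orbF2.
by rewrite (orbF_edge_transitive exy yFx).
Qed.

Lemma nbhd2_sub_orbF u : nbhd2 e u \subset orbF u.
Proof.
apply/subsetP => v; rewrite inE => /and3P[_ _ /existsP[w /andP[euw ewv]]].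
have [//|vFw] := n_orbits2_cover v orbF2 (orbF_independent euw).
by have := orbF_independent ewv; rewrite vFw.
Qed.

(* For d in D u take a path u - a - d u; with v := d^-1 a the path
   v - u - d v shows d \in D v, and D v = D w as v lies in the F-orbit of w. *)
Lemma dist2_elts_sub u w : w \notin orbF u -> D u \subset D w.
Proof.
move=> wFu; apply/subsetP => d; rewrite mem_dist2_elts => /andP[Fd].
rewrite inE => /and3P[du_u _ /existsP[a /andP[eua eadu]]].
have Gd := subsetP sFG d Fd.
have euv : e u (d^-1 a) by rewrite -(autG Gd) permKV e_sym.
have vFw : d^-1 a \in orbF w.
  have [vFu | //] := n_orbits2_cover (d^-1 a) orbF2 wFu.
  by rewrite (negbTE (orbF_independent euv)) in vFu.
rewrite -(dist2_elts_orbit vFw) mem_dist2_elts Fd permKV /= inE.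
apply/and3P; split.
- apply: contra du_u => /eqP/esym/(semiregular_cyclic_normal (groupVr Fd))/eqP.
  by rewrite invg_eq1 => /eqP ->; rewrite perm1.
- apply/negP => /orbF_independent/negP[].
  by rewrite orbit_sym; apply: mem_orbit; rewrite groupV.
- by apply/existsP; exists u; rewrite e_sym euv.
Qed.

(* The subgroup generated by D u moves u along paths of length 2, so by
   connectivity its orbit meets every vertex at distance at most 1; as F is
   regular on the orbit of u, this forces F \subset <<D u>>. *)
Lemma gen_dist2_elts u : F \subset <<D u>>.
Proof.
have sEF : <<D u>> \subset F by rewrite gen_subG subsetIl.
have clE p : p \in orbit 'P <<D u>> u -> nbhd2 e p \subset orbit 'P <<D u>> u.
  case/orbitP=> h Eh <-; apply/subsetP => v; rewrite /= apermE.
  have Gh := subsetP sFG h (subsetP sEF h Eh).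
  rewrite -(permKV h v) (graph_auts_nbhd2 _ _ autG Gh) => vN2.
  have /orbitP[f Ff /= fu] := subsetP (nbhd2_sub_orbF u) _ vN2.
  rewrite apermE in fu.
  have Df : f \in D u by rewrite mem_dist2_elts Ff fu.
  by rewrite -fu -permM; apply: mem_orbit; apply: groupM => //; apply: mem_gen.
apply/subsetP => f Ff.
have [|[p]] := connect_dist2_closed e_sym e_conn (orbit_refl _ _ u) clE (f u).
  case/orbitP=> h Eh hu.
  by rewrite (eq_perm_cyclic_normal Ff (subsetP sEF h Eh) (esym hu)).
case/orbitP=> h Eh <- /orbF_independent/negP[].
apply: (orbit_trans (y := u)); first exact: mem_orbit.
by rewrite orbit_sym; apply: mem_orbit; apply: (subsetP sEF).
Qed.

(* Conjugations by elements of N(F) commute on the cyclic group F.  So if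
   t w = u and x in G_u satisfies d ^ x = d ^ t, then y := t * x^-1 fixes d,
   hence every conjugate d ^ x' with x' in G_u, and these exhaust D u. *)
Lemma cent_dist2_elts_outside u : exists2 y, y \in G :\: F & D u \subset 'C[y].
Proof.
have [w wFu] := n_orbits2_exists u orbF2.
have [t Gt /= tw] := atransP2 trG (in_setT w) (in_setT u); rewrite apermE in tw.
have outF y : y \in G -> u = y w -> y \in G :\: F.
  move=> Gy uyw; rewrite inE Gy andbT; apply: contra wFu => Fy.
  by rewrite orbit_sym uyw; apply: mem_orbit.
have [D0 | [d Dd]] := set_0Vmem (D u).
  by exists t; [exact: outF | rewrite D0 sub0set].
have Ddt : d ^ t \in D u.
  by rewrite tw dist2_eltsJ // memJ_conjg (subsetP (dist2_elts_sub wFu)).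
have [x /setIP[Gx /astab1P /= xu] dx] := dist2_elts_conj_trans Dd Ddt.
rewrite apermE in xu.
have Gy : t * x^-1 \in G by rewrite groupM ?groupV.
exists (t * x^-1).
  by apply: outF => //; rewrite permM -tw -{2}xu permK.
apply/subsetP => _ /(dist2_elts_conj_trans Dd)[x' /setIP[Gx' _] <-].
apply/cent1P/commgP/conjg_fixP.
rewrite (cyclic_conjgC cycF) ?(subsetP nFG) //; last first.
  by move: Dd; rewrite mem_dist2_elts => /andP[].
by rewrite conjgM -dx conjgK.
Qed.

End NormalSubgroupOrbits.

Theorem lemma4p6 (T : finType) (e : rel T) (G : {group {perm T}}) :
  simple_graph e -> graph_connected e -> graph_auts e G ->
  dist2_transitive e G -> solvable G ->
  squarefree #|T| -> squarefree #|'F(G)| ->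
  n_orbits 'F(G)%G <> 2.
Proof.
move=> [e_sym _] e_conn autG [_ trG locG] solG _ sqfF orbF2.
have cycF := squarefree_nil_cyclic sqfF (Fitting_nil G).
have sFG := Fitting_sub G; have nFG := normal_norm (Fitting_normal G).
have arcG v := (locG v).1; have dist2G v := (locG v).2.
have /card_gt0P[_ /imsetP[u _ _]] : 0 < n_orbits 'F(G)%G by rewrite orbF2.
have [y /setDP[Gy FNy] cDy] := cent_dist2_elts_outside e_sym e_conn autG trG
  sFG nFG arcG cycF dist2G orbF2 u.
have sFE := gen_dist2_elts e_sym e_conn autG trG sFG nFG arcG cycF orbF2 u.
have cFy : y \in 'C_G('F(G)) by rewrite inE Gy -sub_cent1 (subset_trans sFE) ?gen_subG.
by rewrite (subsetP (cent_sub_Fitting solG) y cFy) in FNy.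
Qed.
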